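(* Let $D\subset\mathbb N$ and let $g_1,g_2:D\to\mathbb R$ satisfy $g_2(n)\ge g_1(n)$ for all $n\in D$, $\lim_{n\to\infty}g_1(n)=\infty$ and $\lim_{n\to\infty}g_2(n)/n=0$. Let $f:D\to\mathbb R$ be such that there is $n_0\in D$ with $f(n)\ge g_1(n)$ for all $n\in D$, $n\ge n_0$, and suppose $f(n)\le g_2(n)$ for infinitely many $n\in D$. Then $\Omega(f)\ne\emptyset$, the slope set $A_f=\{a_1,\dots,a_k\}$ is finite, and $$a_1<a_2<\cdots<a_k=0.$$
   Context: Let $D=\{x_0<x_1<x_2<\cdots\}\subset\mathbb R$ be a strictly increasing sequence (finite or infinite) and $f:D\to\mathbb R$. A function $h:D\to\mathbb R$ is convex on $D$ if $h(x)\le \frac{(b-x)h(a)+(x-a)h(b)}{b-a}$ for all $a<x<b$ in $D$. Let $\Omega(f)$ be the set of convex $h:D\to\mathbb R$ with $h\le f$ on $D$. If $\Omega(f)\ne\emptyset$, the lower convex envelope of $f$ is $\breve f(x):=\sup\{h(x):h\in\Omega(f)\}$, a piecewise linear convex function on $D$. Its vertex set $H_f=\{m_0=x_0<m_1<m_2<\cdots\}\subset D$ consists of $x_0$ together with the points of $D$ at which $\breve f=f$ and $\breve f$ changes slope, so that $\breve f$ is linear on $D\cap[m_{i-1},m_i]$ for each $i$. The slope set $A_f=\{a_1<a_2<\cdots\}$ consists of the slopes $a_i=\frac{f(m_i)-f(m_{i-1})}{m_i-m_{i-1}}$ of $\breve f$ on $[m_{i-1},m_i]$; if $D$ is infinite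 and $H_f=\{m_0,\dots,m_k\}$ is finite, then $\breve f$ is linear on $D\cap[m_k,\infty)$ and $A_f=\{a_1,\dots,a_k,a_{k+1}\}$, where $a_{k+1}$ is the slope of $\breve f$ on $D\cap[m_k,\infty)$. *)

From Stdlib Require Import Reals Lra Lia.
Open Scope R_scope.

(* D : nat -> Prop is a subset of N; functions are nat -> R, only values on D matter. *)

Definition convex_on (D : nat -> Prop) (h : nat -> R) : Prop :=
  forall a x b : nat, D a -> D x -> D b -> (a < x)%nat -> (x < b)%nat ->
    h x <= ((INR b - INR x) * h a + (INR x - INR a) * h b) / (INR b - INR a).

Definition in_Omega (D : nat -> Prop) (f h : nat -> R) : Prop :=
  convex_on D h /\ forall x, D x -> h x <= f x.

Definition Omega_nonempty (D : nat -> Prop) (f : nat -> R) : Prop :=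
  exists h, in_Omega D f h.

Definition is_envelope (D : nat -> Prop) (f e : nat -> R) : Prop :=
  forall x, D x -> is_lub (fun y => exists h, in_Omega D f h /\ y = h x) (e x).

Definition slope (e : nat -> R) (p q : nat) : R := (e q - e p) / (INR q - INR p).

Definition is_min_of (D : nat -> Prop) (x0 : nat) : Prop :=
  D x0 /\ forall x, D x -> (x0 <= x)%nat.

Definition D_succ (D : nat -> Prop) (p q : nat) : Prop :=
  D p /\ D q /\ (p < q)%nat /\ forall x, D x -> ~ (p < x < q)%nat.

Definition vertex (D : nat -> Prop) (f e : nat -> R) (m : nat) : Prop :=
  is_min_of D m \/
  (D m /\ e m = f m /\
   exists p s, D_succ D p m /\ D_succ D m s /\ slope e p m <> slope e m s).

Definition consec_vertices (D : nat -> Prop) (f e : nat -> R) (m m' : nat) : Prop :=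
  vertex D f e m /\ vertex D f e m' /\ (m < m')%nat /\
  forall x, vertex D f e x -> ~ (m < x < m')%nat.

Definition vertices_finite (D : nat -> Prop) (f e : nat -> R) : Prop :=
  exists N, forall m, vertex D f e m -> (m <= N)%nat.

Definition slope_set (D : nat -> Prop) (f e : nat -> R) (a : R) : Prop :=
  (exists m m', consec_vertices D f e m m' /\
      a = (f m' - f m) / (INR m' - INR m)) \/
  (vertices_finite D f e /\
   exists mk s, vertex D f e mk /\ (forall m, vertex D f e m -> (m <= mk)%nat) /\
     D_succ D mk s /\ a = slope e mk s).

From Stdlib Require Import Reals Lra Lia Arith Wf_nat Classical ClassicalEpsilon.
Open Scope R_scope.

(* Since f >= g1 eventually and g1 -> oo, f tends to infinity on D, hence is
   bounded below; a constant lies in Omega(f) and the envelope e exists by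
   completeness.  The envelope is the greatest convex minorant of f, and all the
   argument uses is this maximality: e touches f at min D and wherever it bends
   (a line through a bend, slightly raised, would be a larger minorant).
   Growth then pins down e: f <= g2 = o(n) infinitely often forbids positive
   slopes, so e is nonincreasing; as f -> oo, e attains its infimum (else a
   raised constant is a larger minorant), so e is eventually constant.  Hence
   every vertex lies before the constancy point, the vertices are finitely many
   and can be enumerated, and beyond the last vertex e has no bend, so it is
   affine there with slope 0.  The slopes between consecutive vertices strictly
   increase since e bends at every vertex. *)

Lemma least_nat (P : nat -> Prop) :
  (exists n, P n) -> exists n, P n /\ forall m, P m -> (n <= m)%nat.
Proof.
  intros Hex.
  destruct (dec_inh_nat_subset_has_unique_least_element P (fun n => classic (P n)) Hex)
    as [n [Hn _]].
  exists n; exact Hn.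
Qed.

Lemma Rdiv_le_cross (P Q u w : R) : 0 < u -> 0 < w -> P * w <= Q * u -> P / u <= Q / w.
Proof.
  intros Hu Hw H.
  apply Rmult_le_reg_r with (u * w); [nra|].
  replace (P / u * (u * w)) with (P * w) by (field; lra).
  replace (Q / w * (u * w)) with (Q * u) by (field; lra).
  exact H.
Qed.

Lemma INR_gap (a b : nat) : (a < b)%nat -> 1 <= INR b - INR a.
Proof.
  intros H. rewrite <- minus_INR by lia.
  change 1 with (INR 1). apply le_INR. lia.
Qed.

Lemma chord_mono (a x b : nat) (A B A' B' : R) : (a < x)%nat -> (x < b)%nat ->
  A <= A' -> B <= B' ->
  ((INR b - INR x) * A + (INR x - INR a) * B) / (INR b - INR a) <=
  ((INR b - INR x) * A' + (INR x - INR a) * B') / (INR b - INR a).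
Proof.
  intros H1 H2 HA HB. pose proof (lt_INR _ _ H1). pose proof (lt_INR _ _ H2).
  unfold Rdiv; apply Rmult_le_compat_r.
  - left; apply Rinv_0_lt_compat; lra.
  - apply Rplus_le_compat; apply Rmult_le_compat_l; lra.
Qed.

Lemma slope_chord (e : nat -> R) (a b : nat) :
  (a < b)%nat -> e b = e a + slope e a b * (INR b - INR a).
Proof. intros H. pose proof (lt_INR _ _ H). unfold slope. field. lra. Qed.

Lemma slope_join (e : nat -> R) (a b c : nat) (t : R) : (a < b)%nat -> (b < c)%nat ->
  slope e a b = t -> slope e b c = t -> slope e a c = t.
Proof.
  intros Hab Hbc H1 H2. pose proof (lt_INR _ _ Hab). pose proof (lt_INR _ _ Hbc).
  pose proof (slope_chord e a b Hab). pose proof (slope_chord e b c Hbc).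
  unfold slope. rewrite H3 in H4. rewrite H4, H1, H2. field. lra.
Qed.

Lemma slope_split (e : nat -> R) (a b c : nat) (t : R) : (a < b)%nat -> (b < c)%nat ->
  slope e a b = t -> slope e a c = t -> slope e b c = t.
Proof.
  intros Hab Hbc H1 H2. pose proof (lt_INR _ _ Hab). pose proof (lt_INR _ _ Hbc).
  pose proof (slope_chord e a b Hab). pose proof (slope_chord e a c ltac:(lia)).
  unfold slope. rewrite H3, H4, H1, H2. field. lra.
Qed.

Lemma affine_convex (D : nat -> Prop) (al be : R) : convex_on D (fun x => al + be * INR x).
Proof.
  intros a x b _ _ _ H1 H2. pose proof (lt_INR _ _ H1). pose proof (lt_INR _ _ H2).
  right. field. lra.
Qed.

Lemma D_pred_exists (D : nat -> Prop) (a b : nat) : D a -> D b -> (a < b)%nat ->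
  exists p, D_succ D p b /\ (a <= p)%nat.
Proof.
  intros Ha Hb Hab.
  assert (Hex : exists t, D (b - 1 - t)%nat /\ (t <= b - 1 - a)%nat).
  { exists (b - 1 - a)%nat. replace (b - 1 - (b - 1 - a))%nat with a by lia. auto. }
  destruct (least_nat _ Hex) as [t [[Ht1 Ht2] Hmin]].
  exists (b - 1 - t)%nat. split; [|lia].
  split; [auto|split; [auto|split; [lia|]]]. intros y Hy [Hy1 Hy2].
  assert (Hd : D (b - 1 - (b - 1 - y))%nat) by (replace (b - 1 - (b - 1 - y))%nat with y by lia; auto).
  assert (Hle : (b - 1 - y <= b - 1 - a)%nat) by lia.
  specialize (Hmin (b - 1 - y)%nat (conj Hd Hle)). lia.
Qed.

Lemma D_succ_exists (D : nat -> Prop) (a : nat) :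
  (forall N, exists n, D n /\ (n >= N)%nat) -> D a -> exists s, D_succ D a s.
Proof.
  intros Hinf Ha.
  assert (Hex : exists n, D n /\ (a < n)%nat).
  { destruct (Hinf (S a)) as [n [Hn1 Hn2]]. exists n; split; auto. }
  destruct (least_nat _ Hex) as [s [[Hs1 Hs2] Hmin]].
  exists s. split; [auto|split; [auto|split; [lia|]]]. intros x Hx [Hx1 Hx2].
  specialize (Hmin x (conj Hx Hx1)). lia.
Qed.

Lemma D_succ_le_right (D : nat -> Prop) (p s x : nat) :
  D_succ D p s -> D x -> (p < x)%nat -> (s <= x)%nat.
Proof.
  intros [_ [_ [_ Hno]]] Hx Hpx. destruct (le_lt_dec s x); auto.
  exfalso; apply (Hno x); auto.
Qed.

Lemma D_succ_le_left (D : nat -> Prop) (p s x : nat) :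
  D_succ D p s -> D x -> (x < s)%nat -> (x <= p)%nat.
Proof.
  intros [_ [_ [_ Hno]]] Hx Hxs. destruct (le_lt_dec x p); auto.
  exfalso; apply (Hno x); auto.
Qed.

Section ConvexSlopes.
Variables (D : nat -> Prop) (e : nat -> R).
Hypothesis e_convex : convex_on D e.

Lemma convex_cleared (a x b : nat) : D a -> D x -> D b -> (a < x)%nat -> (x < b)%nat ->
  e x * (INR b - INR a) <= (INR b - INR x) * e a + (INR x - INR a) * e b.
Proof.
  intros Ha Hx Hb H1 H2. pose proof (lt_INR _ _ H1). pose proof (lt_INR _ _ H2).
  pose proof (e_convex a x b Ha Hx Hb H1 H2) as Hc.
  apply Rmult_le_compat_r with (r := INR b - INR a) in Hc; [|lra].
  unfold Rdiv in Hc. rewrite Rmult_assoc, Rinv_l, Rmult_1_r in Hc by lra. exact Hc.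
Qed.

Lemma slope_le_left (a x b : nat) : D a -> D x -> D b -> (a < x)%nat -> (x < b)%nat ->
  slope e a x <= slope e a b.
Proof.
  intros Ha Hx Hb H1 H2. pose proof (lt_INR _ _ H1). pose proof (lt_INR _ _ H2).
  pose proof (convex_cleared a x b Ha Hx Hb H1 H2).
  unfold slope; apply Rdiv_le_cross; lra.
Qed.

Lemma slope_le_right (a x b : nat) : D a -> D x -> D b -> (a < x)%nat -> (x < b)%nat ->
  slope e a b <= slope e x b.
Proof.
  intros Ha Hx Hb H1 H2. pose proof (lt_INR _ _ H1). pose proof (lt_INR _ _ H2).
  pose proof (convex_cleared a x b Ha Hx Hb H1 H2).
  unfold slope; apply Rdiv_le_cross; lra.
Qed.

Lemma slope_mono_right (m s b : nat) : D m -> D s -> D b -> (m < s)%nat -> (s <= b)%nat ->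
  slope e m s <= slope e m b.
Proof.
  intros Hm Hs Hb H1 H2. destruct (Nat.eq_dec s b) as [->|Hne]; [lra|].
  apply slope_le_left; auto; lia.
Qed.

Lemma slope_mono_left (a p m : nat) : D a -> D p -> D m -> (a <= p)%nat -> (p < m)%nat ->
  slope e a m <= slope e p m.
Proof.
  intros Ha Hp Hm H1 H2. destruct (Nat.eq_dec a p) as [->|Hne]; [lra|].
  apply slope_le_right; auto; lia.
Qed.

Lemma slope_mid (a x b : nat) : D a -> D x -> D b -> (a < x)%nat -> (x < b)%nat ->
  slope e a x <= slope e x b.
Proof.
  intros. eapply Rle_trans; [apply slope_le_left|apply slope_le_right]; eauto.
Qed.

Lemma support_right (m s x : nat) : D_succ D m s -> D x -> (m < x)%nat ->
  e m + slope e m s * (INR x - INR m) <= e x.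
Proof.
  intros Hsucc Hx Hmx. pose proof Hsucc as [Hm [Hs [Hms _]]].
  pose proof (lt_INR _ _ Hmx).
  pose proof (slope_mono_right m s x Hm Hs Hx Hms (D_succ_le_right D m s x Hsucc Hx Hmx)).
  rewrite (slope_chord e m x Hmx).
  apply Rplus_le_compat_l, Rmult_le_compat_r; lra.
Qed.

Lemma support_left (p m x : nat) : D_succ D p m -> D x -> (x < m)%nat ->
  e m - slope e p m * (INR m - INR x) <= e x.
Proof.
  intros Hsucc Hx Hxm. pose proof Hsucc as [Hp [Hm [Hpm _]]].
  pose proof (lt_INR _ _ Hxm).
  pose proof (slope_mono_left x p m Hx Hp Hm (D_succ_le_left D p m x Hsucc Hx Hxm) Hpm).
  rewrite (slope_chord e x m Hxm).
  assert (slope e x m * (INR m - INR x) <= slope e p m * (INR m - INR x))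
    by (apply Rmult_le_compat_r; lra).
  lra.
Qed.

End ConvexSlopes.

Definition greatest_minorant (D : nat -> Prop) (f e : nat -> R) : Prop :=
  in_Omega D f e /\ forall h, in_Omega D f h -> forall x, D x -> h x <= e x.

(* The pointwise supremum of Omega(f) is itself in Omega(f), hence its greatest element. *)
Lemma envelope_greatest (D : nat -> Prop) (f e : nat -> R) :
  is_envelope D f e -> greatest_minorant D f e.
Proof.
  intros He. split; [split|].
  - intros a x b Ha Hx Hb H1 H2. apply (proj2 (He x Hx)).
    intros y [h [Hh ->]]. eapply Rle_trans; [exact (proj1 Hh a x b Ha Hx Hb H1 H2)|].
    apply chord_mono; auto; [apply (proj1 (He a Ha))|apply (proj1 (He b Hb))]; exists h; auto.
  - intros x Hx. apply (proj2 (He x Hx)). intros y [h [Hh ->]]. apply (proj2 Hh); auto.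
  - intros h Hh x Hx. apply (proj1 (He x Hx)). exists h; auto.
Qed.

(* If [f] is bounded below, Omega(f) contains a constant and the envelope exists
   by completeness of R. *)
Lemma envelope_exists (D : nat -> Prop) (f : nat -> R) (c : R) :
  (forall x, D x -> c <= f x) -> exists e, is_envelope D f e.
Proof.
  intros Hc.
  assert (Hcst : in_Omega D f (fun x => c + 0 * INR x)).
  { split; [apply affine_convex|]. intros x Hx. specialize (Hc x Hx). lra. }
  assert (Hsup : forall x, exists y, D x ->
      is_lub (fun y => exists h, in_Omega D f h /\ y = h x) y).
  { intros x. destruct (classic (D x)) as [Hx|Hx]; [|exists 0; intros; contradiction].
    assert (Hbd : bound (fun y => exists h, in_Omega D f h /\ y = h x)).
    { exists (f x). intros y [h [Hh ->]]. apply (proj2 Hh); auto. }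
    assert (Hne : exists y, exists h, in_Omega D f h /\ y = h x).
    { exists (c + 0 * INR x), (fun x => c + 0 * INR x). auto. }
    destruct (completeness _ Hbd Hne) as [y Hy]. exists y; auto. }
  destruct (choice _ Hsup) as [e He]. exists e. exact He.
Qed.

Section GreatestMinorant.
Variables (D : nat -> Prop) (f e : nat -> R).
Hypothesis e_greatest : greatest_minorant D f e.

Lemma minorant_convex : convex_on D e.
Proof. exact (proj1 (proj1 e_greatest)). Qed.

Lemma minorant_le (x : nat) : D x -> e x <= f x.
Proof. exact (proj2 (proj1 e_greatest) x). Qed.

Lemma affine_below_minorant (al be : R) :
  (forall x, D x -> al + be * INR x <= f x) -> forall x, D x -> al + be * INR x <= e x.
Proof.
  intros HL. apply (proj2 e_greatest). split; [apply affine_convex|exact HL].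
Qed.

(* [e] touches [f] at the least point of D: raising [e] there keeps it convex. *)
Lemma minorant_touches_min (x0 : nat) : is_min_of D x0 -> e x0 = f x0.
Proof.
  intros [Hx0 Hmin].
  set (h := fun x => if Nat.eq_dec x x0 then f x0 else e x).
  assert (Hin : in_Omega D f h).
  { split.
    - intros a x b Ha Hx Hb H1 H2. assert (x <> x0) by (pose proof (Hmin a Ha); lia).
      unfold h at 1. destruct (Nat.eq_dec x x0); [contradiction|].
      eapply Rle_trans; [exact (minorant_convex a x b Ha Hx Hb H1 H2)|].
      apply chord_mono; auto; unfold h;
        (destruct Nat.eq_dec; [subst; apply minorant_le; auto|lra]).
    - intros x Hx. unfold h. destruct (Nat.eq_dec x x0); [subst; lra|apply minorant_le; auto]. }
  pose proof (proj2 e_greatest h Hin x0 Hx0) as Hh. pose proof (minorant_le x0 Hx0).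
  unfold h in Hh. destruct (Nat.eq_dec x0 x0); [lra|contradiction].
Qed.

(* [e] touches [f] wherever it bends: otherwise a line with intermediate slope,
   slightly above [e] at [m], would be a larger affine minorant. *)
Lemma minorant_touches_kink (p m s : nat) : D_succ D p m -> D_succ D m s ->
  slope e p m < slope e m s -> e m = f m.
Proof.
  intros Hp Hs Hlt. pose proof minorant_convex as Hc.
  assert (Hm : D m) by (destruct Hs; auto).
  destruct (Rle_lt_or_eq_dec _ _ (minorant_le m Hm)) as [Hgap|]; auto. exfalso.
  set (s1 := slope e p m) in *. set (s2 := slope e m s) in *. set (t := (s1 + s2) / 2).
  set (d := Rmin (f m - e m) ((s2 - s1) / 2)).
  assert (Hd : 0 < d) by (unfold d; apply Rmin_glb_lt; lra).
  assert (Hd1 : d <= f m - e m) by apply Rmin_l.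
  assert (Hd2 : d <= (s2 - s1) / 2) by apply Rmin_r.
  assert (HL : forall x, D x -> (e m + d - t * INR m) + t * INR x <= f x).
  { intros x Hx. destruct (Nat.lt_total x m) as [Hxm|[->|Hmx]]; [| lra |];
      eapply Rle_trans; try (apply minorant_le; exact Hx).
    - pose proof (support_left D e Hc p m x Hp Hx Hxm). fold s1 in H.
      pose proof (INR_gap _ _ Hxm).
      assert ((t - s1) * 1 <= (t - s1) * (INR m - INR x))
        by (apply Rmult_le_compat_l; unfold t; lra).
      unfold t in *. nra.
    - pose proof (support_right D e Hc m s x Hs Hx Hmx). fold s2 in H.
      pose proof (INR_gap _ _ Hmx).
      assert ((s2 - t) * 1 <= (s2 - t) * (INR x - INR m))
        by (apply Rmult_le_compat_l; unfold t; lra).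
      unfold t in *. nra. }
  pose proof (affine_below_minorant _ _ HL m Hm). lra.
Qed.

Lemma kink_is_vertex (p m s : nat) : D_succ D p m -> D_succ D m s ->
  slope e p m < slope e m s -> vertex D f e m.
Proof.
  intros Hp Hs Hlt. right. split; [destruct Hs; auto|]. split.
  - exact (minorant_touches_kink p m s Hp Hs Hlt).
  - exists p, s. split; [exact Hp|split; [exact Hs|apply Rlt_not_eq; exact Hlt]].
Qed.

Lemma vertex_in_D (m : nat) : vertex D f e m -> D m.
Proof. intros [[H _]|[H _]]; exact H. Qed.

Lemma vertex_touches (m : nat) : vertex D f e m -> e m = f m.
Proof. intros [Hm|[_ [H _]]]; [exact (minorant_touches_min m Hm)|exact H]. Qed.

Lemma vertex_chord (m m' : nat) : vertex D f e m -> vertex D f e m' ->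
  (f m' - f m) / (INR m' - INR m) = slope e m m'.
Proof. intros Hm Hm'. unfold slope. rewrite (vertex_touches m Hm), (vertex_touches m' Hm'). reflexivity. Qed.

Lemma vertex_slope_lt (m a b : nat) : vertex D f e m -> D a -> (a < m)%nat ->
  D b -> (m < b)%nat -> slope e a m < slope e m b.
Proof.
  pose proof minorant_convex as Hc.
  intros [[Hm Hmin]|[Hm [_ [p [s [Hp [Hs Hne]]]]]]] Ha Ham Hb Hmb.
  - specialize (Hmin a Ha). lia.
  - pose proof Hp as [Hp1 [_ [Hpm _]]]. pose proof Hs as [_ [Hs1 [Hms _]]].
    pose proof (slope_mid D e Hc p m s Hp1 Hm Hs1 Hpm Hms).
    pose proof (slope_mono_left D e Hc a p m Ha Hp1 Hm (D_succ_le_left D p m a Hp Ha Ham) Hpm).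
    pose proof (slope_mono_right D e Hc m s b Hm Hs1 Hb Hms (D_succ_le_right D m s b Hs Hb Hmb)).
    destruct H; [lra|contradiction].
Qed.

End GreatestMinorant.

Section Growth.
Variables (D : nat -> Prop) (f e : nat -> R).
Hypothesis e_greatest : greatest_minorant D f e.

(* If [f <= g2 = o(n)] infinitely often, [e] has no increasing chord: a positive
   slope would force [e n >= c + slope * n] along the whole tail. *)
Lemma minorant_slopes_nonpos (g2 : nat -> R) :
  (forall eps : R, eps > 0 -> exists N : nat, forall n, D n -> (n >= N)%nat ->
       Rabs (g2 n / INR n) < eps) ->
  (forall N : nat, exists n, D n /\ (n >= N)%nat /\ f n <= g2 n) ->
  forall a b, D a -> D b -> (a < b)%nat -> slope e a b <= 0.
Proof.
  intros Hg2 Hio a b Ha Hb Hab.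
  destruct (Rle_or_lt (slope e a b) 0) as [|Hpos]; auto. exfalso.
  set (sg := slope e a b) in *.
  destruct (Hg2 (sg / 2) ltac:(lra)) as [N HN].
  destruct (INR_unbounded ((sg * INR a - e a) * 2 / sg)) as [N2 HN2].
  destruct (Hio (N + N2 + b + 1)%nat) as [n [Hn [Hnge Hfn]]].
  assert (Hbn : (b < n)%nat) by lia.
  pose proof (lt_INR _ _ Hbn). pose proof (lt_INR _ _ Hab). pose proof (pos_INR a).
  assert (HnN2 : INR N2 <= INR n) by (apply le_INR; lia).
  assert (Hg : g2 n < sg / 2 * INR n).
  { destruct (Rabs_def2 _ _ (HN n Hn ltac:(lia))) as [Hlt _].
    apply Rmult_lt_compat_r with (r := INR n) in Hlt; [|lra].
    replace (g2 n / INR n * INR n) with (g2 n) in Hlt by (field; lra). lra. }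
  assert (Hlarge : sg * INR a - e a <= sg / 2 * INR n).
  { assert (Hk : (sg * INR a - e a) * 2 / sg <= INR n) by lra.
    apply Rmult_le_compat_l with (r := sg / 2) in Hk; [|lra].
    replace (sg / 2 * ((sg * INR a - e a) * 2 / sg)) with (sg * INR a - e a) in Hk
      by (field; lra). exact Hk. }
  pose proof (slope_mono_right D e (minorant_convex D f e e_greatest) a b n Ha Hb Hn Hab
    ltac:(lia)) as Hsl. fold sg in Hsl.
  pose proof (slope_chord e a n ltac:(lia)).
  assert (sg * (INR n - INR a) <= slope e a n * (INR n - INR a))
    by (apply Rmult_le_compat_r; lra).
  pose proof (minorant_le D f e e_greatest n Hn).
  lra.
Qed.

(* From now on [e] has no increasing chord (as just shown under the g2 hypotheses). *)
Hypothesis slopes_nonpos : forall a b, D a -> D b -> (a < b)%nat -> slope e a b <= 0.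

Lemma minorant_nonincreasing (a b : nat) : D a -> D b -> (a <= b)%nat -> e b <= e a.
Proof.
  intros Ha Hb Hab. destruct (Nat.eq_dec a b) as [->|Hne]; [lra|].
  assert (Hlt : (a < b)%nat) by lia. pose proof (lt_INR _ _ Hlt).
  rewrite (slope_chord e a b Hlt). pose proof (slopes_nonpos a b Ha Hb Hlt).
  assert (0 <= - slope e a b * (INR b - INR a)) by (apply Rmult_le_pos; lra).
  lra.
Qed.

(* If moreover [f] tends to infinity, the nonincreasing [e] attains its infimum [L]:
   otherwise the constant [L + eps] would be a larger minorant for small [eps].
   So [e] is eventually constant. *)
Lemma minorant_eventually_constant (c : R) :
  (forall x, D x -> c <= e x) ->
  (forall M : R, exists N : nat, forall n, D n -> (n >= N)%nat -> f n >= M) ->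
  (forall N, exists n, D n /\ (n >= N)%nat) ->
  exists z0, D z0 /\ forall x, D x -> (z0 <= x)%nat -> e x = e z0.
Proof.
  intros Hc Hfl Hinf.
  set (E := fun y => exists x, D x /\ y = - e x).
  assert (HB : bound E) by (exists (- c); intros y [x [Hx ->]]; specialize (Hc x Hx); lra).
  destruct (Hinf 0%nat) as [w [Hw _]].
  destruct (completeness E HB (ex_intro _ (- e w) (ex_intro _ w (conj Hw eq_refl))))
    as [L [HLub HLleast]].
  assert (Hlo : forall x, D x -> - L <= e x).
  { intros x Hx. assert (- e x <= L) by (apply HLub; exists x; auto). lra. }
  destruct (classic (exists z0, D z0 /\ e z0 <= - L)) as [[z0 [Hz0 Hez]]|Hno].
  - exists z0; split; auto. intros x Hx Hzx.
    pose proof (minorant_nonincreasing z0 x Hz0 Hx Hzx). pose proof (Hlo x Hx). lra.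
  - exfalso.
    assert (Hgt : forall x, D x -> - L < e x).
    { intros x Hx. destruct (Rle_or_lt (e x) (- L)); auto. exfalso; apply Hno; eauto. }
    destruct (Hfl (- L + 1)) as [N HN]. destruct (Hinf N) as [N' [HN' HN'ge]].
    set (eps := Rmin 1 (e N' + L)).
    assert (Heps : 0 < eps) by (unfold eps; apply Rmin_glb_lt; [lra|specialize (Hgt N' HN'); lra]).
    assert (He1 : eps <= 1) by apply Rmin_l.
    assert (He2 : eps <= e N' + L) by apply Rmin_r.
    assert (Hlift : forall x, D x -> (- L + eps) + 0 * INR x <= e x).
    { apply (affine_below_minorant D f e e_greatest). intros x Hx.
      destruct (le_lt_dec N x) as [Hge|Hlt].
      - specialize (HN x Hx Hge). lra.
      - pose proof (minorant_nonincreasing x N' Hx HN' ltac:(lia)).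
        pose proof (minorant_le D f e e_greatest x Hx). lra. }
    assert (HU : is_upper_bound E (L - eps)).
    { intros y [x [Hx ->]]. specialize (Hlift x Hx). lra. }
    specialize (HLleast _ HU). lra.
Qed.

End Growth.

Section Tail.
Variables (D : nat -> Prop) (f e : nat -> R).
Hypothesis e_greatest : greatest_minorant D f e.

(* Where [e] is constant it does not bend, so all vertices precede [z0]. *)
Lemma vertices_before_constancy (z0 : nat) : D z0 ->
  (forall x, D x -> (z0 <= x)%nat -> e x = e z0) ->
  forall m, vertex D f e m -> (m <= z0)%nat.
Proof.
  intros Hz Hconst m [[Hm Hmin]|[Hm [_ [p [s [Hp [Hs Hne]]]]]]]; [exact (Hmin z0 Hz)|].
  destruct (le_lt_dec m z0) as [|Hlt]; auto. exfalso.
  pose proof Hp as [Hp1 [_ [Hpm _]]]. pose proof Hs as [_ [Hs1 [Hms _]]].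
  pose proof (D_succ_le_left D p m z0 Hp Hz Hlt).
  apply Hne. unfold slope.
  rewrite (Hconst p Hp1), (Hconst m Hm), (Hconst s Hs1) by lia.
  unfold Rminus at 1 3. rewrite !Rplus_opp_r. unfold Rdiv. ring.
Qed.

(* Beyond the last vertex [mk] there is no bend (a bend would be a vertex),
   so [e] is affine on the tail of D, with the slope of its first chord. *)
Lemma tail_affine (mk s : nat) : (forall m, vertex D f e m -> (m <= mk)%nat) ->
  D_succ D mk s -> forall x, D x -> (mk < x)%nat -> slope e mk x = slope e mk s.
Proof.
  intros Hlast Hsucc. pose proof Hsucc as [Hmk [Hs [Hms _]]].
  pose proof (minorant_convex D f e e_greatest) as Hc.
  set (sg := slope e mk s).
  intros x. induction x as [x IH] using lt_wf_ind. intros Hx Hmx.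
  pose proof (D_succ_le_right D mk s x Hsucc Hx Hmx) as Hsx.
  destruct (Nat.eq_dec s x) as [<-|Hne]; [reflexivity|].
  destruct (D_pred_exists D s x Hs Hx ltac:(lia)) as [p [Hpx Hsp]].
  pose proof Hpx as [Hp [_ [Hplt _]]].
  assert (Hmkp : slope e mk p = sg) by (apply IH; auto; lia).
  destruct (D_pred_exists D mk p Hmk Hp ltac:(lia)) as [q [Hqp Hmq]].
  pose proof Hqp as [Hq [_ [Hqlt _]]].
  assert (Hqp_sl : slope e q p = sg).
  { destruct (Nat.eq_dec mk q) as [<-|Hne']; [exact Hmkp|].
    apply (slope_split e mk q p); [lia|lia| |exact Hmkp].
    apply IH; auto; lia. }
  assert (Hpx_sl : slope e p x = sg).
  { destruct (slope_mid D e Hc q p x Hq Hp Hx Hqlt Hplt) as [Hbend|Heq]; [|congruence].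
    pose proof (Hlast p (kink_is_vertex D f e e_greatest q p x Hqp Hpx Hbend)). lia. }
  apply (slope_join e mk p x); auto; lia.
Qed.

Lemma last_slope_zero (z0 mk s : nat) :
  (forall x, D x -> (z0 <= x)%nat -> e x = e z0) ->
  (forall N, exists n, D n /\ (n >= N)%nat) ->
  (forall m, vertex D f e m -> (m <= mk)%nat) -> D_succ D mk s -> slope e mk s = 0.
Proof.
  intros Hconst Hinf Hlast Hsucc.
  destruct (Hinf (z0 + mk + 1)%nat) as [x [Hx Hxge]].
  destruct (Hinf (x + 1)%nat) as [x' [Hx' Hx'ge]].
  assert (Hflat : slope e x x' = 0).
  { unfold slope. rewrite (Hconst x Hx), (Hconst x' Hx') by lia.
    unfold Rminus at 1. rewrite Rplus_opp_r. unfold Rdiv. ring. }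
  rewrite <- Hflat. symmetry.
  apply (slope_split e mk x x'); try lia; apply (tail_affine mk s); auto; lia.
Qed.

End Tail.

Definition enumerates_vertices_from (D : nat -> Prop) (f e : nat -> R)
    (m r : nat) (v : nat -> nat) : Prop :=
  v 0%nat = m /\
  (forall i, (i < r)%nat -> consec_vertices D f e (v i) (v (S i))) /\
  (forall i, (i <= r)%nat -> vertex D f e (v i)) /\
  (forall x, vertex D f e x -> (m <= x)%nat -> exists i, (i <= r)%nat /\ x = v i) /\
  (forall x, vertex D f e x -> (x <= v r)%nat).

Lemma enumerate_vertices (D : nat -> Prop) (f e : nat -> R) (N : nat) :
  (forall m, vertex D f e m -> (m <= N)%nat) ->
  forall m, vertex D f e m -> exists r v, enumerates_vertices_from D f e m r v.
Proof.
  intros HN.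
  assert (Hgen : forall d m, (N - m <= d)%nat -> vertex D f e m ->
                   exists r v, enumerates_vertices_from D f e m r v).
  2:{ intros m. exact (Hgen (N - m)%nat m (le_n _)). }
  induction d as [|d IH]; intros m Hd Hv.
  - exists 0%nat, (fun _ => m).
    repeat split; auto; try (intros; lia);
      intros x Hx; pose proof (HN x Hx); pose proof (HN m Hv); [|lia].
    intros Hmx. exists 0%nat. split; auto. lia.
  - destruct (classic (exists x, vertex D f e x /\ (m < x)%nat)) as [Hex|Hno].
    + destruct (least_nat _ Hex) as [m' [[Hv' Hmm'] Hmin]].
      pose proof (HN m' Hv').
      destruct (IH m' ltac:(lia) Hv') as [r [v [Hv0 [Hcons [Hvert [Hcov Hlast]]]]]].
      exists (S r), (fun i => match i with O => m | S j => v j end).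
      split; [reflexivity|]. split; [|split; [|split]].
      * intros [|i] Hi; [|apply Hcons; lia].
        rewrite Hv0. split; [exact Hv|split; [exact Hv'|split; [exact Hmm'|]]].
        intros x Hx [H1 H2]. specialize (Hmin x (conj Hx H1)). lia.
      * intros [|i] Hi; auto. apply Hvert; lia.
      * intros x Hx Hmx. destruct (Nat.eq_dec m x) as [<-|Hne]; [exists 0%nat; split; auto; lia|].
        assert (Hlt : (m < x)%nat) by lia. specialize (Hmin x (conj Hx Hlt)).
        destruct (Hcov x Hx Hmin) as [i [Hi ->]]. exists (S i); split; auto; lia.
      * exact Hlast.
    + exists 0%nat, (fun _ => m).
      assert (Hmax : forall x, vertex D f e x -> (x <= m)%nat).
      { intros x Hx. destruct (le_lt_dec x m); auto. exfalso; apply Hno; eauto. }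
      split; [reflexivity|]. split; [intros; lia|]. split; [auto|]. split; [|exact Hmax].
      intros x Hx Hmx. exists 0%nat. split; auto. pose proof (Hmax x Hx). lia.
Qed.

Section SlopeSequence.
Variables (D : nat -> Prop) (f e : nat -> R) (r : nat) (v : nat -> nat).
Hypothesis e_greatest : greatest_minorant D f e.
Hypothesis D_infinite : forall N, exists n, D n /\ (n >= N)%nat.
Hypothesis v0_min : is_min_of D (v 0%nat).
Hypothesis v_enum : enumerates_vertices_from D f e (v 0%nat) r v.
Hypothesis tail_slope_zero : forall s, D_succ D (v r) s -> slope e (v r) s = 0.

Definition slope_seq (i : nat) : R :=
  if Nat.leb i r then slope e (v (pred i)) (v i) else 0.

Lemma slope_seq_chord (j : nat) : (S j <= r)%nat -> slope_seq (S j) = slope e (v j) (v (S j)).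
Proof. intros Hj. unfold slope_seq. destruct (Nat.leb_spec (S j) r); [reflexivity|lia]. Qed.

Lemma slope_seq_last : slope_seq (S r) = 0.
Proof. unfold slope_seq. destruct (Nat.leb_spec (S r) r); [lia|reflexivity]. Qed.

Lemma enum_vertex (i : nat) : (i <= r)%nat -> vertex D f e (v i).
Proof. apply (proj1 (proj2 (proj2 v_enum))). Qed.

Lemma enum_in_D (i : nat) : (i <= r)%nat -> D (v i).
Proof. intros Hi. exact (vertex_in_D D f e (v i) (enum_vertex i Hi)). Qed.

Lemma enum_consec (i : nat) : (i < r)%nat -> consec_vertices D f e (v i) (v (S i)).
Proof. apply (proj1 (proj2 v_enum)). Qed.

Lemma enum_last (x : nat) : vertex D f e x -> (x <= v r)%nat.
Proof. apply (proj2 (proj2 (proj2 (proj2 v_enum)))). Qed.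

(* Every vertex is listed, since [v 0] is the least point of D. *)
Lemma enum_complete (x : nat) : vertex D f e x -> exists i, (i <= r)%nat /\ x = v i.
Proof.
  intros Hx. apply (proj1 (proj2 (proj2 (proj2 v_enum))) x Hx).
  exact (proj2 v0_min x (vertex_in_D D f e x Hx)).
Qed.

(* The slopes strictly increase, because [e] bends at each listed vertex,
   including the last one, after which the slope is 0. *)
Lemma slope_seq_increasing (i : nat) : (1 <= i)%nat -> (i < S r)%nat ->
  slope_seq i < slope_seq (S i).
Proof.
  intros Hi1 Hir. destruct i as [|j]; [lia|].
  rewrite (slope_seq_chord j) by lia.
  assert (Hvj : (v j < v (S j))%nat) by (apply (enum_consec j); lia).
  destruct (le_lt_dec (S (S j)) r) as [Hnext|Hend].
  - rewrite (slope_seq_chord (S j)) by lia.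
    apply (vertex_slope_lt D f e e_greatest); try (apply enum_in_D; lia);
      [apply enum_vertex; lia|exact Hvj|apply (enum_consec (S j)); lia].
  - assert (Hj : S j = r) by lia. rewrite Hj in *. rewrite slope_seq_last.
    destruct (D_succ_exists D (v r) D_infinite (enum_in_D r (le_n r))) as [s Hs].
    pose proof Hs as [_ [HsD [Hrs _]]]. rewrite <- (tail_slope_zero s Hs).
    apply (vertex_slope_lt D f e e_greatest); auto; [apply enum_vertex|apply enum_in_D]; lia.
Qed.

Lemma slope_seq_exhausts (a : R) :
  slope_set D f e a <-> exists i, (1 <= i <= S r)%nat /\ a = slope_seq i.
Proof.
  split.
  - intros [[m [m' [[Hvm [Hvm' [Hmm' Hbetween]]] ->]]]|[_ [mk [s [Hvk [Hlast [Hsucc ->]]]]]]].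
    + destruct (enum_complete m Hvm) as [i [Hi ->]].
      destruct (Nat.eq_dec i r) as [->|Hne]; [pose proof (enum_last m' Hvm'); lia|].
      pose proof (enum_consec i ltac:(lia)) as [_ [Hvi' [Hlt Hbetween']]].
      assert (Hm' : m' = v (S i)).
      { destruct (Nat.lt_total m' (v (S i))) as [Hl|[Heq|Hg]]; auto; exfalso.
        - apply (Hbetween' m' Hvm'); lia.
        - apply (Hbetween (v (S i)) Hvi'); lia. }
      subst m'. exists (S i). split; [lia|].
      rewrite slope_seq_chord by lia. apply (vertex_chord D f e e_greatest); auto.
    + assert (Hmk : mk = v r).
      { pose proof (enum_last mk Hvk). pose proof (Hlast (v r) (enum_vertex r (le_n r))). lia. }
      subst mk. exists (S r). split; [lia|]. rewrite slope_seq_last. exact (tail_slope_zero s Hsucc).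
  - intros [i [Hi ->]]. destruct (le_lt_dec i r) as [Hir|Hir].
    + left. destruct i as [|j]; [lia|]. exists (v j), (v (S j)).
      split; [apply enum_consec; lia|].
      rewrite slope_seq_chord by lia. symmetry. apply (vertex_chord D f e e_greatest); apply enum_vertex; lia.
    + right. replace i with (S r) by lia. rewrite slope_seq_last.
      split; [exists (v r); exact enum_last|].
      destruct (D_succ_exists D (v r) D_infinite (enum_in_D r (le_n r))) as [s Hs].
      exists (v r), s. split; [apply enum_vertex; lia|]. split; [exact enum_last|].
      split; [exact Hs|]. symmetry. exact (tail_slope_zero s Hs).
Qed.

End SlopeSequence.

Lemma bounded_below_of_tends_to_infinity (D : nat -> Prop) (f : nat -> R) :
  (forall M : R, exists N : nat, forall n, D n -> (n >= N)%nat -> f n >= M) ->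
  exists c, forall x, D x -> c <= f x.
Proof.
  intros Hfl. destruct (Hfl 0) as [N HN].
  assert (Hhead : forall K, exists c, forall n, (n < K)%nat -> c <= f n).
  { induction K as [|K [c Hc]]; [exists 0; intros; lia|].
    exists (Rmin c (f K)). intros n Hn. destruct (Nat.eq_dec n K) as [->|]; [apply Rmin_r|].
    eapply Rle_trans; [apply Rmin_l|apply Hc; lia]. }
  destruct (Hhead N) as [c Hc]. exists (Rmin c 0). intros x Hx.
  destruct (le_lt_dec N x) as [Hge|Hlt].
  - specialize (HN x Hx Hge). pose proof (Rmin_r c 0). lra.
  - specialize (Hc x Hlt). pose proof (Rmin_l c 0). lra.
Qed.

Lemma minorant_slope_structure (D : nat -> Prop) (f e g2 : nat -> R) (c : R) :
  greatest_minorant D f e ->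
  (forall N, exists n, D n /\ (n >= N)%nat) ->
  (forall x, D x -> c <= f x) ->
  (forall M : R, exists N : nat, forall n, D n -> (n >= N)%nat -> f n >= M) ->
  (forall eps : R, eps > 0 -> exists N : nat, forall n, D n -> (n >= N)%nat ->
       Rabs (g2 n / INR n) < eps) ->
  (forall N : nat, exists n, D n /\ (n >= N)%nat /\ f n <= g2 n) ->
  exists (k : nat) (a : nat -> R),
    (1 <= k)%nat /\
    (forall i, (1 <= i)%nat -> (i < k)%nat -> a i < a (S i)) /\
    a k = 0 /\
    (forall s, slope_set D f e s <-> exists i, (1 <= i <= k)%nat /\ s = a i).
Proof.
  intros He Hinf Hc Hfl Hg2 Hio.
  pose proof (minorant_slopes_nonpos D f e He g2 Hg2 Hio) as Hsl.
  assert (Hce : forall x, D x -> c + 0 * INR x <= e x).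
  { apply (affine_below_minorant D f e He). intros x Hx. specialize (Hc x Hx). lra. }
  destruct (minorant_eventually_constant D f e He Hsl c) as [z0 [Hz0 Hconst]];
    [intros x Hx; specialize (Hce x Hx); lra|exact Hfl|exact Hinf|].
  destruct (Hinf 0%nat) as [w [Hw _]].
  destruct (least_nat D (ex_intro _ w Hw)) as [x0 [Hx0 Hx0min]].
  assert (Hmin : is_min_of D x0) by (split; auto).
  destruct (enumerate_vertices D f e z0 (vertices_before_constancy D f e z0 Hz0 Hconst)
              x0 (or_introl Hmin)) as [r [v Hv]].
  pose proof Hv as [Hv0 _]. rewrite <- Hv0 in Hmin, Hv.
  assert (Hzero : forall s, D_succ D (v r) s -> slope e (v r) s = 0).
  { intros s. apply (last_slope_zero D f e He z0); auto. exact (enum_last D f e r v Hv). }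
  exists (S r), (slope_seq e r v). split; [lia|]. split; [|split].
  - exact (slope_seq_increasing D f e r v He Hinf Hv Hzero).
  - exact (slope_seq_last e r v).
  - exact (slope_seq_exhausts D f e r v He Hinf Hmin Hv Hzero).
Qed.

Theorem lemma4 (D : nat -> Prop) (g1 g2 f : nat -> R) (n0 : nat) :
  (forall n, D n -> g2 n >= g1 n) ->
  (forall M : R, exists N : nat, forall n, D n -> (n >= N)%nat -> g1 n >= M) ->
  (forall eps : R, eps > 0 -> exists N : nat, forall n, D n -> (n >= N)%nat ->
       Rabs (g2 n / INR n) < eps) ->
  D n0 ->
  (forall n, D n -> (n >= n0)%nat -> f n >= g1 n) ->
  (forall N : nat, exists n, D n /\ (n >= N)%nat /\ f n <= g2 n) ->
  Omega_nonempty D f /\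
  (exists e, is_envelope D f e) /\
  (forall e, is_envelope D f e ->
     exists (k : nat) (a : nat -> R),
       (1 <= k)%nat /\
       (forall i, (1 <= i)%nat -> (i < k)%nat -> a i < a (S i)) /\
       a k = 0 /\
       (forall s, slope_set D f e s <-> exists i, (1 <= i <= k)%nat /\ s = a i)).
Proof.
  intros _ Hg1 Hg2 _ Hfg1 Hio.
  assert (Hinf : forall N, exists n, D n /\ (n >= N)%nat).
  { intros N. destruct (Hio N) as [n [Hn [HnN _]]]. eauto. }
  assert (Hfl : forall M : R, exists N : nat, forall n, D n -> (n >= N)%nat -> f n >= M).
  { intros M. destruct (Hg1 M) as [N HN]. exists (N + n0)%nat. intros n Hn Hge.
    specialize (HN n Hn ltac:(lia)). specialize (Hfg1 n Hn ltac:(lia)). lra. }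
  destruct (bounded_below_of_tends_to_infinity D f Hfl) as [c Hc].
  split; [|split].
  - exists (fun x => c + 0 * INR x). split; [apply affine_convex|].
    intros x Hx. specialize (Hc x Hx). lra.
  - exact (envelope_exists D f c Hc).
  - intros e He.
    exact (minorant_slope_structure D f e g2 c (envelope_greatest D f e He) Hinf Hc Hfl Hg2 Hio).
Qed.
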